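(* Let $k\ge1$, $\beta\ge1$ integers, $0\le\ell\le k-1$, and consider weighted $k$-server on a uniform metric space $S$ with server weights $1,\beta,\ldots,\beta^{k-1}$. Define $c_0=0$ and $c_\ell=\beta^{\ell-1}+\beta\cdot(\lceil n_{\ell-1}/2\rceil+1)\cdot c_{\ell-1}$ for $\ell>0$. Let $P\subseteq S$ with $|P|=n_\ell$, and suppose a server configuration is given in which at least one server other than the $\ell$ lightest servers (those of weights $1,\ldots,\beta^{\ell-1}$) occupies a point of $P$. Then for every request sequence that can be generated by a call $\mathsf{strategy}(\ell,P)$, there is a way to serve it starting from this configuration with total cost at most $c_\ell$.
   Context: The sequence $n_0,n_1,\ldots$ is defined by $n_0=1$ and $n_i=\left(\lceil n_{i-1}/2\rceil+1\right)\left(\lfloor n_{i-1}/2\rfloor+1\right)$ for $i>0$. Weighted $k$-server on a uniform metric: $k$ servers with given weights sit at points; each requested point must be occupied by a server after serving it; moving a server of weight $w$ to a different point costs $w$. For every $\ell\ge1$ and every set $P$ with $|P|=n_\ell$, fix a set system $\mathcal{Q}(\ell,P)\subseteq 2^P$ consisting of $\lceil n_{\ell-1}/2\rceil+1$ sets each of size $n_{\ell-1}$, such that every $p\in P$ is missed by some set of $\mathcal{Q}(\ell,P)$, and for every $p\in P$ there is $q\in P$ with every set of $\mathcal{Q}(\ell,P)$ containing $p$ or $q$ (such systems exist). The procedure $\mathsf{strategy}(\ell,P)$ (with $|P|=n_\ell$) is: if $\ell=0$, request the unique point of $P$; if $\ell>0$, repeat $\beta\cdot(\lceil n_{\ell-1}/2\rceil+1)$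 times: pick $P'$ uniformly at random from $\mathcal{Q}(\ell,P)$, independently of all previous random choices, and run $\mathsf{strategy}(\ell-1,P')$. *)

From mathcomp Require Import all_boot all_order.
From mathcomp Require Import finmap.
Set Implicit Arguments. Unset Strict Implicit. Unset Printing Implicit Defensive.

Fixpoint nseqv (i : nat) : nat :=
  match i with
  | 0 => 1
  | i'.+1 => (uphalf (nseqv i') + 1) * ((nseqv i')./2 + 1)
  end.

Fixpoint cbound (beta l : nat) : nat :=
  match l with
  | 0 => 0
  | l'.+1 => beta ^ l' + beta * (uphalf (nseqv l') + 1) * cbound beta l'
  end.

Definition valid_Q (S : choiceType) (Q : nat -> {fset S} -> seq {fset S}) : Prop :=
  forall (l : nat) (P : {fset S}), 1 <= l -> (#|` P|)%fset = nseqv l ->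
    [/\ uniq (Q l P),
        size (Q l P) = uphalf (nseqv l.-1) + 1,
        (forall A, A \in Q l P -> (A `<=` P)%fset /\ (#|` A|)%fset = nseqv l.-1),
        (forall p, p \in P -> exists2 A, A \in Q l P & p \notin A) &
        (forall p, p \in P -> exists2 q, q \in P &
            forall A, A \in Q l P -> (p \in A) || (q \in A))].

(* can_gen Q beta l P sigma : sigma is a request sequence that can be generated
   (with positive probability) by a call strategy(l,P). *)
Fixpoint can_gen (S : choiceType) (Q : nat -> {fset S} -> seq {fset S})
    (beta l : nat) (P : {fset S}) (sigma : seq S) : Prop :=
  match l with
  | 0 => exists p, P = [fset p]%fset /\ sigma = [:: p]
  | l'.+1 =>
      exists L : seq ({fset S} * seq S),
        [/\ size L = beta * (uphalf (nseqv l') + 1),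
            (forall x, x \in L -> x.1 \in Q l P /\ can_gen Q beta l' x.1 x.2) &
            sigma = flatten (map snd L)]
  end.

(* Configurations: server i : 'I_k sits at conf i and has weight beta^i. *)
Definition move_cost (S : eqType) (k beta : nat) (c c' : 'I_k -> S) : nat :=
  \sum_(i < k) (if c i == c' i then 0 else beta ^ i).

(* confs = the configurations after serving each request; request r is served
   by configuration c iff some server is at r in c. *)
Fixpoint serves (S : eqType) (k : nat) (sigma : seq S) (confs : seq ('I_k -> S)) : Prop :=
  match sigma, confs with
  | [::], [::] => True
  | r :: sigma', c :: confs' => (exists i, c i = r) /\ serves sigma' confs'
  | _, _ => False
  end.

Fixpoint total_cost (S : eqType) (k beta : nat) (c0 : 'I_k -> S) (confs : seq ('I_k -> S)) : nat :=
  match confs with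
  | [::] => 0
  | c :: cs => move_cost beta c0 c + total_cost beta c cs
  end.

From mathcomp Require Import all_boot all_order.
From mathcomp Require Import finmap.
From mathcomp Require Import zify.

Set Implicit Arguments. Unset Strict Implicit. Unset Printing Implicit Defensive.

(* We prove a stronger claim:
   the sequence can be served at cost <= c_l while the servers l, l+1, ...
   never move.  For l = 0 the only request lies where a heavy server already
   sits.  For l > 0, let server i >= l sit at p in P, and take q in P such
   that every set of Q(l,P) contains p or q.  Move server l-1 (weight
   beta^(l-1)) to q once.  From then on every phase strategy(l-1,P'),
   P' in Q(l,P), finds one of the servers i, l-1 inside P', so the induction
   hypothesis serves it at cost <= c_(l-1) without moving servers >= l-1;
   the beta (ceil(n_(l-1)/2)+1) phases are chained by a general
   concatenation lemma. *)

Section Schedules.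

Variables (S : eqType) (k beta : nat).
Implicit Types (c d e : 'I_k -> S) (cs : seq ('I_k -> S)) (sigma : seq S).

Lemma serves_cat sigma1 sigma2 cs1 cs2 :
  serves sigma1 cs1 -> serves sigma2 cs2 -> serves (sigma1 ++ sigma2) (cs1 ++ cs2).
Proof.
elim: sigma1 cs1 => [|r sigma IH] [|c cs] //= [served Hrest] H2.
by split => //; apply: IH.
Qed.

Lemma total_cost_cat c cs1 cs2 :
  total_cost beta c (cs1 ++ cs2) =
  total_cost beta c cs1 + total_cost beta (last c cs1) cs2.
Proof. by elim: cs1 c => //= d cs IH c; rewrite IH addnA. Qed.

Lemma move_cost_triangle c d e :
  move_cost beta c e <= move_cost beta c d + move_cost beta d e.
Proof.
rewrite /move_cost -big_split /=; apply: leq_sum => i _.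
case: (c i =P e i) => [//|ce]; case: (c i =P d i) => [cd|_]; last exact: leq_addr.
by case: (d i =P e i) => [de|]; first by rewrite cd de in ce.
Qed.

Lemma total_cost_detour c d cs :
  total_cost beta c cs <= move_cost beta c d + total_cost beta d cs.
Proof.
case: cs => [|e cs] //=; rewrite addnA leq_add2r; exact: move_cost_triangle.
Qed.

Definition relocate c (i : 'I_k) (q : S) : 'I_k -> S :=
  fun j => if j == i then q else c j.

Lemma move_cost_relocate c (i : 'I_k) (q : S) :
  move_cost beta c (relocate c i q) <= beta ^ i.
Proof.
rewrite /move_cost (bigD1 i) //= /relocate eqxx big1 ?addn0 => [|j /negbTE ->];
  last by rewrite eqxx.
by case: eqP.
Qed.

Lemma move_cost_refl c : move_cost beta c c = 0.
Proof. by rewrite /move_cost big1 // => j _; rewrite eqxx. Qed.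

Definition agree_from (l : nat) c d : bool :=
  [forall j : 'I_k, (l <= j) ==> (c j == d j)].

Lemma agree_fromP l c d :
  reflect (forall j : 'I_k, l <= j -> c j = d j) (agree_from l c d).
Proof.
apply: (iffP forallP) => [H j lj | H j]; first by apply/eqP; rewrite (implyP (H j)).
by apply/implyP => /H ->.
Qed.

Lemma agree_from_trans l c d e :
  agree_from l c d -> agree_from l d e -> agree_from l c e.
Proof.
by move=> /agree_fromP cd /agree_fromP de; apply/agree_fromP => j lj; rewrite cd ?de.
Qed.

Lemma agree_from_mono l l' c d :
  l <= l' -> agree_from l c d -> agree_from l' c d.
Proof.
by move=> ll' /agree_fromP cd; apply/agree_fromP => j lj; apply: cd; apply: leq_trans lj.
Qed.

Lemma agree_from_relocate c (i : 'I_k) (q : S) : agree_from i.+1 c (relocate c i q).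
Proof.
apply/agree_fromP => j ij; rewrite /relocate; case: eqP => // ji.
by move: ij; rewrite ji ltnn.
Qed.

Lemma serve_flatten (Inv : pred ('I_k -> S)) (C : nat) (ss : seq (seq S)) c :
  (forall sigma, sigma \in ss -> forall d, Inv d ->
     exists cs, [/\ serves sigma cs, total_cost beta d cs <= C & all Inv cs]) ->
  Inv c ->
  exists cs, [/\ serves (flatten ss) cs, total_cost beta c cs <= size ss * C & all Inv cs].
Proof.
elim: ss c => [|sigma ss IH] c phase Invc; first by exists [::].
have [cs1 [serve1 cost1 inv1]] := phase sigma (mem_head _ _) c Invc.
have Invlast : Inv (last c cs1).
  have inv_all : all Inv (c :: cs1) by rewrite /= Invc.
  by move: inv_all; rewrite lastI all_rcons => /andP[].
have [cs2 [serve2 cost2 inv2]] :=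
  IH _ (fun s s_in => phase s (mem_behead (s := sigma :: ss) s_in)) Invlast.
exists (cs1 ++ cs2); split; first exact: serves_cat.
- by rewrite total_cost_cat mulSn leq_add.
- by rewrite all_cat inv1.
Qed.

End Schedules.

Section Strategy.

Variables (S : choiceType) (k beta : nat) (Q : nat -> {fset S} -> seq {fset S}).
Hypothesis validQ : valid_Q Q.

Lemma serve_strategy l (P : {fset S}) (conf : 'I_k -> S) sigma :
  l < k -> (#|` P|)%fset = nseqv l ->
  (exists2 i : 'I_k, l <= i & conf i \in P) ->
  can_gen Q beta l P sigma ->
  exists cs, [/\ serves sigma cs, total_cost beta conf cs <= cbound beta l &
                 all (agree_from l conf) cs].
Proof.
elim: l P conf sigma => [|l IH] P conf sigma lk cardP [i li confiP] gen.
  case: gen => p [EP ->]; exists [:: conf]; split => /=.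
  - split => //; exists i; apply/eqP; by rewrite EP in_fset1 in confiP.
  - by rewrite move_cost_refl.
  - by rewrite andbT; apply/agree_fromP.
have [_ _ Q_sub _ Q_pair] := validQ (isT : 0 < l.+1) cardP.
have [q qP pq_hit] := Q_pair _ confiP.
have lk' : l < k by apply: ltnW.
pose i0 := Ordinal lk'.
pose c1 := relocate conf i0 q.
have conf_c1 : agree_from l.+1 conf c1 := agree_from_relocate conf i0 q.
have c1_refl : agree_from l c1 c1 by apply/agree_fromP.
case: gen => L [sizeL phases ->].
have phase : forall s, s \in map snd L -> forall d, agree_from l c1 d ->
    exists cs, [/\ serves s cs, total_cost beta d cs <= cbound beta l &
                   all (agree_from l c1) cs].
  move=> s /mapP [x xL ->] d c1d.
  have [xQ xgen] := phases x xL.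
  have [_ cardx] := Q_sub _ xQ.
  have hit : exists2 j : 'I_k, l <= j & d j \in x.1.
    have dE (j : 'I_k) : l <= j -> d j = c1 j.
      by move=> lj; rewrite (agree_fromP _ _ _ c1d j lj).
    case/orP: (pq_hit _ xQ) => [pin | qin].
    - by exists i; rewrite ?dE ?(ltnW li) // -(agree_fromP _ _ _ conf_c1).
    - by exists i0; rewrite ?dE //= /c1 /relocate eqxx.
  have [cs [serve cost agree]] := IH _ d _ lk' cardx hit xgen.
  exists cs; split => //; apply: sub_all agree => e de; exact: agree_from_trans de.
have [cs [serve cost agree]] := serve_flatten phase c1_refl.
exists cs; split => //.
- apply: leq_trans (total_cost_detour _ _ c1 _) _.
  rewrite size_map sizeL in cost; exact: leq_add (move_cost_relocate _ _ _ _) cost.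
- apply: sub_all agree => e c1e.
  exact: agree_from_trans conf_c1 (agree_from_mono (leqnSn l) c1e).
Qed.

End Strategy.

Theorem lemma6 (S : choiceType) (k beta l : nat)
    (Q : nat -> {fset S} -> seq {fset S}) (P : {fset S}) (conf : 'I_k -> S) :
  1 <= k -> 1 <= beta -> l <= k - 1 ->
  valid_Q Q ->
  (#|` P|)%fset = nseqv l ->
  (exists i : 'I_k, l <= i /\ conf i \in P) ->
  forall sigma : seq S, can_gen Q beta l P sigma ->
  exists confs : seq ('I_k -> S),
    serves sigma confs /\ total_cost beta conf confs <= cbound beta l.
Proof.
move=> k_pos _ lk validQ cardP [i [li confiP]] sigma gen.
have lk' : l < k by lia.
have [cs [serve cost _]] := serve_strategy validQ lk' cardP (ex_intro2 _ _ i li confiP) gen.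
by exists cs.
Qed.
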